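(* Let $W$ be a complex vector space, $\phi(x,z)$ an associate of the additive formal group, and $(a_i(x),b_i(x))$ ($i=1,\dots,n$) $\phi$-quasi compatible ordered pairs in $\mathcal{E}(W)$. Suppose that $$\sum_{i=1}^ng_i(x_1,x_2)a_i(x_1)b_i(x_2)\in\mathrm{Hom}(W,W((x_1,x_2)))$$ with $g_1,\dots,g_n\in\mathbb{C}((x_1,x_2))$. Then $$\sum_{i=1}^ng_i(\phi(x,z),x)Y^\phi_{\mathcal{E}}(a_i(x),z)b_i(x)=\Big(\sum_{i=1}^ng_i(x_1,x)a_i(x_1)b_i(x)\Big)\Big|_{x_1=\phi(x,z)}.$$
   Context: $\mathcal{E}(W)=\mathrm{Hom}(W,W((x)))$; $\mathbb{C}((x_1,x_2))=\mathbb{C}[[x_1,x_2]][x_1^{-1},x_2^{-1}]$. An associate is $\phi(x,z)\in\mathbb{C}((x))[[z]]$ with $\phi(x,0)=x$ and $\phi(\phi(x,x_2),x_0)=\phi(x,x_0+x_2)$. For $g\in\mathbb{C}((x_1,x_2))$, $g(\phi(x,z),x)\in\mathbb{C}((x))[[z]]$ is the substitution $x_1=\phi(x,z),x_2=x$ (negative powers of $\phi$ taken in $\mathbb{C}((x))[[z]]$); similarly for elements of $\mathrm{Hom}(W,W((x_1,x_2)))$. A pair $(a(x),b(x))$ is $\phi$-quasi compatible if $p(x_1,x_2)a(x_1)b(x_2)\in\mathrm{Hom}(W,W((x_1,x_2)))$ for some $p\in\mathbb{C}[[x,y]]$ with $p(\phi(x,z),x)\ne0$; then $Y^\phi_{\mathcal{E}}(a(x),z)b(x):=p(\phi(x,z),x)^{-1}(p(x_1,x)a(x_1)b(x))|_{x_1=\phi(x,z)}\in\mathcal{E}(W)((z))$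 (inverse in $\mathbb{C}((x))((z))$; independent of $p$). *)

(* Formal series are encoded as coefficient families indexed
   by integer exponents, together with support predicates; infinite-looking
   sums that are finite by the support conditions are computed by [fsum]. *)
From HB Require Import structures.
From mathcomp Require Import all_boot all_order all_algebra.
From Stdlib Require Import ClassicalEpsilon.
Set Implicit Arguments. Unset Strict Implicit. Unset Printing Implicit Defensive.
Import Order.TTheory GRing.Theory Num.Theory.
Local Open Scope ring_scope.

Definition fin_supp (V : zmodType) (f : int -> V) : Prop :=
  exists N : nat, forall k : int, (N < absz k)%N -> f k = 0.

(* sum over all k of f k, when f has finite support (0 otherwise; the value
   does not depend on the chosen bound N) *)
Definition fsum (V : zmodType) (f : int -> V) : V :=
  match excluded_middle_informative (fin_supp f) with
  | left H =>
      let N := proj1_sig (constructive_indefinite_description _ H) in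
      \sum_(i < (N.*2).+1) f (i%:Z - N%:Z)
  | right _ => 0
  end.

(* f : int -> V is the coefficient family of an element of V((x)) *)
Definition lbounded (V : zmodType) (f : int -> V) : Prop :=
  exists N : int, forall n, n < N -> f n = 0.

(* f : int -> int -> V is the coefficient family of an element of
   V[[x1,x2]][x1^-1,x2^-1]   (f m n = coefficient of x1^m x2^n) *)
Definition lbounded2 (V : zmodType) (f : int -> int -> V) : Prop :=
  exists N : int, forall m n, (m < N) || (n < N) -> f m n = 0.

Definition is_powser2 (K : fieldType) (p : int -> int -> K) : Prop :=
  forall m n, (m < 0) || (n < 0) -> p m n = 0.

(* a : int -> W -> W encodes a(x) = sum_n (a n) x^n ;
   a \in E(W) = Hom(W, W((x))) *)
Definition in_EW (K : fieldType) (W : lmodType K) (a : int -> W -> W) : Prop :=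
  (forall n (c : K) (u v : W), a n (c *: u + v) = c *: a n u + a n v) /\
  (forall w, lbounded (fun n => a n w)).

(* F (m n : int) : W -> W encodes F(x1,x2) = sum F m n x1^m x2^n;
   F \in Hom(W, W((x1,x2))) *)
Definition inHom2 (K : fieldType) (W : lmodType K) (F : int -> int -> W -> W)
  : Prop :=
  (forall m n (c : K) (u v : W), F m n (c *: u + v) = c *: F m n u + F m n v) /\
  (forall w, lbounded2 (fun m n => F m n w)).

Section Series.
Variables (K : fieldType) (W : lmodType K).

(* a(x1) b(x2) : coefficient of x1^m x2^n is a_m b_n *)
Definition prodab (a b : int -> W -> W) : int -> int -> W -> W :=
  fun m n w => a m (b n w).

(* g(x1,x2) F(x1,x2) for g in C((x1,x2)) and F in Hom(W, W((x1))((x2))) *)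
Definition mul12 (g : int -> int -> K) (F : int -> int -> W -> W)
  : int -> int -> W -> W :=
  fun m n w => fsum (fun l => fsum (fun k => g k l *: F (m - k) (n - l) w)).

(* ---- C((x))((z)): A j k = coefficient of z^j x^k ---- *)
Definition isKxz (A : int -> int -> K) : Prop :=
  (exists N : int, forall j k, j < N -> A j k = 0) /\
  forall j, lbounded (A j).

Definition oneKK : int -> int -> K := fun j k => ((j == 0) && (k == 0))%:R.

Definition mulKK (A B : int -> int -> K) : int -> int -> K :=
  fun j k => fsum (fun i => fsum (fun l => A i l * B (j - i) (k - l))).

(* multiplicative inverse in the field C((x))((z)) (0 if none) *)
Definition invKK (A : int -> int -> K) : int -> int -> K :=
  match excluded_middle_informative
          (exists B, isKxz B /\ forall j k, mulKK A B j k = oneKK j k) with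
  | left H => proj1_sig (constructive_indefinite_description _ H)
  | right _ => fun _ _ => 0
  end.

Definition powKK (A : int -> int -> K) (m : int) : int -> int -> K :=
  match m with
  | Posz n => iter n (mulKK A) oneKK
  | Negz n => iter n.+1 (mulKK (invKK A)) oneKK
  end.

(* C((x))((z)) times (W-operator valued) series: S j k w, coefficient
   of z^j x^k applied to w *)
Definition mulKW (A : int -> int -> K) (S : int -> int -> W -> W)
  : int -> int -> W -> W :=
  fun j k w => fsum (fun i => fsum (fun l => A i l *: S (j - i) (k - l) w)).

(* ---- associates: phi j k = coefficient of z^j x^k in phi(x,z) ---- *)
Definition associate (phi : int -> int -> K) : Prop :=
  [/\ (forall j k, j < 0 -> phi j k = 0),
      (forall j, lbounded (phi j)),
      (forall k, phi 0 k = (k == 1)%:R)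
    & (forall (a b : nat) (k : int),
        (* [x0^a x2^b x^k] phi(phi(x,x2),x0) = [x0^a x2^b x^k] phi(x,x0+x2) *)
        fsum (fun m => phi a m * powKK phi m b k)
        = 'C(a + b, a)%:R * phi (a + b)%N k)].

(* substitution x1 = phi(x,z), x2 = x into g in C((x1,x2)):
   result j k = coefficient of z^j x^k *)
Definition subst_s (phi : int -> int -> K) (g : int -> int -> K)
  : int -> int -> K :=
  fun j k => fsum (fun m => fsum (fun n => g m n * powKK phi m j (k - n))).

(* the same for F in Hom(W, W((x1,x2))) *)
Definition subst_W (phi : int -> int -> K) (F : int -> int -> W -> W)
  : int -> int -> W -> W :=
  fun j k w => fsum (fun m => fsum (fun n => powKK phi m j (k - n) *: F m n w)).

Definition qc_witness (phi : int -> int -> K) (a b : int -> W -> W)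
  (p : int -> int -> K) : Prop :=
  [/\ is_powser2 p, inHom2 (mul12 p (prodab a b))
    & subst_s phi p <> (fun _ _ => 0)].

Definition phi_quasi_compatible (phi : int -> int -> K) (a b : int -> W -> W)
  : Prop := exists p, qc_witness phi a b p.

(* Y^phi_E(a(x),z) b(x) computed with a given p *)
Definition Yp (phi : int -> int -> K) (a b : int -> W -> W)
  (p : int -> int -> K) : int -> int -> W -> W :=
  mulKW (invKK (subst_s phi p)) (subst_W phi (mul12 p (prodab a b))).

(* Y^phi_E(a(x),z) b(x): Y j k = coefficient of z^j x^k
   (computed with some witness p; the paper shows independence of p) *)
Definition Y_E (phi : int -> int -> K) (a b : int -> W -> W)
  : int -> int -> W -> W :=
  match excluded_middle_informative (phi_quasi_compatible phi a b) with
  | left H => Yp phi a b (proj1_sig (constructive_indefinite_description _ H))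
  | right _ => fun _ _ _ => 0
  end.

End Series.

(* Pick witnesses [p_i] of quasi compatibility and put [G = sum_i g_i a_i(x1) b_i(x2)].
   In [W((x1))((x2))] one has
     (prod_i p_i) G = sum_i g_i (prod_(i' <> i) p_i') (p_i a_i(x1) b_i(x2)),
   and every factor on the right lies in [K((x1, x2))] or [W((x1, x2))].  There
   the substitution [x1 = phi(x, z), x2 = x] is additive and multiplicative,
   because [phi(x, 0) = x] makes [phi(x, z)^m] have [x]-order about [m] in each
   [z]-degree, so all the double sums involved are finite.  Substituting and
   dividing by the nonzero [prod_i p_i(phi(x, z), x)] in the field
   [K((x))((z))] gives the identity. *)

From HB Require Import structures.
From mathcomp Require Import all_boot all_order all_algebra zify boolp ring.
From Stdlib Require Import ClassicalEpsilon FunctionalExtensionality ProofIrrelevance.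
Set Implicit Arguments. Unset Strict Implicit. Unset Printing Implicit Defensive.
Import Order.TTheory GRing.Theory Num.Theory.
Local Open Scope ring_scope.

Definition zrange (M : nat) : seq int :=
  [seq (i%:Z - M%:Z) | i <- iota 0 (M.*2).+1].

Lemma mem_zrange M x : (x \in zrange M) = (absz x <= M)%N.
Proof.
apply/mapP/idP.
  by case=> i; rewrite mem_iota => /andP[_ Hi] ->; lia.
move=> H; exists (absz (x + M%:Z)); first by rewrite mem_iota; lia.
lia.
Qed.

Lemma zrange_uniq M : uniq (zrange M).
Proof. by rewrite map_inj_uniq ?iota_uniq // => i j /= H; lia. Qed.

Section FiniteSums.
Variable V : zmodType.
Implicit Types f g : int -> V.

Lemma big_supp_eq f s1 s2 : uniq s1 -> uniq s2 ->
  (forall i, f i != 0 -> i \in s1) -> (forall i, f i != 0 -> i \in s2) ->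
  \sum_(i <- s1) f i = \sum_(i <- s2) f i.
Proof.
move=> u1 u2 h1 h2.
have E s : \sum_(i <- s) f i = \sum_(i <- filter (fun i => f i != 0) s) f i.
  rewrite big_filter [RHS]big_mkcond /=; apply: eq_bigr => i _.
  by case: (f i =P 0) => [->|].
rewrite (E s1) (E s2); apply: perm_big; apply: uniq_perm; rewrite ?filter_uniq //.
move=> i; rewrite !mem_filter; apply/andP/andP => -[H1 H2]; split => //; auto.
Qed.

Lemma fsum_zrange f N : (forall k, (N < absz k)%N -> f k = 0) ->
  fsum f = \sum_(i <- zrange N) f i.
Proof.
move=> HN; rewrite /fsum; case: excluded_middle_informative => [H|[]]; last by exists N.
case: (constructive_indefinite_description _ H) => /= N' HN'.
have -> : \sum_(i < (N'.*2).+1) f (i%:Z - N'%:Z) = \sum_(i <- zrange N') f i.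
  by rewrite /zrange big_map -(big_mkord xpredT (fun i : nat => f (i%:Z - N'%:Z)))
    /index_iota subn0.
apply: big_supp_eq; rewrite ?zrange_uniq // => i /eqP Hi; rewrite mem_zrange.
  by case: (leqP (absz i) N') => // /HN'.
by case: (leqP (absz i) N) => // /HN.
Qed.

Lemma fsumE f (s : seq int) : uniq s -> (forall i, f i != 0 -> i \in s) ->
  fsum f = \sum_(i <- s) f i.
Proof.
move=> us Hs.
pose N := \max_(i <- s) absz i.
have HN : forall k, (N < absz k)%N -> f k = 0.
  move=> k Hk; apply/eqP; apply: contraTT Hk => /Hs ks.
  by rewrite -leqNgt /N (big_rem k ks) /= leq_maxl.
rewrite (fsum_zrange HN); apply: big_supp_eq; rewrite ?zrange_uniq // => i Hi.
rewrite mem_zrange; case: (leqP (absz i) N) => // /HN /eqP; by rewrite (negbTE Hi).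
Qed.

Lemma fin_supp_itv f (a b : int) : (forall i, f i != 0 -> a <= i <= b) -> fin_supp f.
Proof.
move=> H; exists (maxn (absz a) (absz b)) => k Hk; apply/eqP; apply: contraTT Hk => /H.
move=> /andP[h1 h2]; rewrite -leqNgt; lia.
Qed.

Lemma eq_fsum f g : f =1 g -> fsum f = fsum g.
Proof. by move=> /functional_extensionality ->. Qed.

Lemma fsum_eq0 f : (forall i, f i = 0) -> fsum f = 0.
Proof.
by move=> H; rewrite (@fsum_zrange _ 0) ?big1 // => i; rewrite H.
Qed.

Lemma fsum_delta f c : (forall i, i != c -> f i = 0) -> fsum f = f c.
Proof.
move=> H; rewrite (@fsumE f [:: c]) ?big_seq1 // => i; rewrite inE.
by apply: contraR => /H ->.
Qed.

(* [fsum] is [0] on families of infinite support, so reindexing needs the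
   displacement bound [C] to preserve finiteness of the support. *)
Lemma fsum_reindex f (h h' : int -> int) (C : nat) : cancel h h' -> cancel h' h ->
  (forall i, (absz (h i) <= absz i + C)%N) -> (forall i, (absz (h' i) <= absz i + C)%N) ->
  fsum (fun i => f (h i)) = fsum f.
Proof.
move=> hK h'K Hh Hh'.
have [[N HN]|nf] := classic (fin_supp f).
  have HN' : forall k, (N + C < absz k)%N -> f (h k) = 0.
    by move=> k Hk; apply: HN; have := Hh' (h k); rewrite hK; lia.
  rewrite (fsum_zrange HN') (fsum_zrange HN) -(big_map h xpredT f).
  apply: big_supp_eq; rewrite ?(map_inj_uniq (can_inj hK)) ?zrange_uniq //.
  - move=> i Hi; apply/mapP; exists (h' i); last by rewrite h'K.
    rewrite mem_zrange; have := Hh' i; case: (leqP (absz i) N); first lia.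
    by move=> /HN /eqP; rewrite (negbTE Hi).
  - move=> i Hi; rewrite mem_zrange.
    by case: (leqP (absz i) N) => // /HN /eqP; rewrite (negbTE Hi).
have nf' : ~ fin_supp (fun i => f (h i)).
  move=> [N HN]; apply: nf; exists (N + C)%N => k Hk.
  by rewrite -(h'K k); apply: HN; have := Hh (h' k); rewrite h'K; lia.
by rewrite /fsum; do 2 case: excluded_middle_informative => //.
Qed.

Lemma fsum_shift f c : fsum (fun i => f (i + c)) = fsum f.
Proof.
apply: (@fsum_reindex f (fun i => i + c) (fun i => i - c) (absz c)).
- by move=> i; rewrite addrK.
- by move=> i; rewrite subrK.
- move=> i; lia.
- move=> i; lia.
Qed.

Lemma fsum_reflect f c : fsum (fun i => f (c - i)) = fsum f.
Proof.
have cK : involutive (fun i => c - i) by move=> i; rewrite opprB addrC subrK.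
apply: (@fsum_reindex f _ _ (absz c) cK cK) => i; lia.
Qed.

Lemma fsumD f g : fin_supp f -> fin_supp g ->
  fsum (fun i => f i + g i) = fsum f + fsum g.
Proof.
move=> [N1 H1] [N2 H2].
have H1' : forall k, (maxn N1 N2 < absz k)%N -> f k = 0 by move=> k Hk; apply: H1; lia.
have H2' : forall k, (maxn N1 N2 < absz k)%N -> g k = 0 by move=> k Hk; apply: H2; lia.
have H3 : forall k, (maxn N1 N2 < absz k)%N -> f k + g k = 0.
  by move=> k Hk; rewrite H1' ?H2' ?addr0.
by rewrite (fsum_zrange H1') (fsum_zrange H2') (fsum_zrange H3) big_split.
Qed.

End FiniteSums.

Lemma fsum_morph (V V' : zmodType) (h : V -> V') (f : int -> V) :
  h 0 = 0 -> {morph h : x y / x + y} -> fin_supp f ->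
  fsum (fun i => h (f i)) = h (fsum f).
Proof.
move=> h0 hD [N HN].
have HN' : forall k, (N < absz k)%N -> h (f k) = 0 by move=> k /HN ->.
by rewrite (fsum_zrange HN') (fsum_zrange HN) (big_morph h hD h0).
Qed.

Section MultipleSums.
Variable V : zmodType.

Definition box2 (F : int -> int -> V) (M : nat) :=
  forall i l, (M < absz i)%N || (M < absz l)%N -> F i l = 0.

Definition box4 (T : int -> int -> int -> int -> V) (M : nat) :=
  forall a b i l, [|| (M < absz a)%N, (M < absz b)%N, (M < absz i)%N | (M < absz l)%N] ->
  T a b i l = 0.

Lemma box2_itv (F : int -> int -> V) (a1 b1 a2 b2 : int) :
  (forall i l, F i l != 0 -> (a1 <= i <= b1) && (a2 <= l <= b2)) ->
  box2 F (absz a1 + absz b1 + absz a2 + absz b2).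
Proof.
move=> H i l Hil; apply/eqP; apply: contraTT Hil => /H /andP[/andP[h1 h2] /andP[h3 h4]].
apply/norP; split; rewrite -leqNgt; lia.
Qed.

Lemma box4_itv (T : int -> int -> int -> int -> V) (a1 b1 a2 b2 a3 b3 a4 b4 : int) :
  (forall a b i l, T a b i l != 0 ->
     [/\ a1 <= a <= b1, a2 <= b <= b2, a3 <= i <= b3 & a4 <= l <= b4]) ->
  box4 T (absz a1 + absz b1 + absz a2 + absz b2 + absz a3 + absz b3 + absz a4 + absz b4).
Proof.
move=> H a b i l Hx; apply/eqP; apply: contraTT Hx => /H.
case=> /andP[h1 h2] /andP[h3 h4] /andP[h5 h6] /andP[h7 h8].
rewrite !negb_or -!leqNgt; apply/and4P; split; lia.
Qed.

Lemma box2_fin_supp (F : int -> int -> V) M i : box2 F M -> fin_supp (F i).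
Proof. by move=> H; exists M => l Hl; apply: H; rewrite Hl orbT. Qed.

Lemma box2_fin_supp_fsum (F : int -> int -> V) M : box2 F M ->
  fin_supp (fun i => fsum (F i)).
Proof. by move=> H; exists M => i Hi; apply: fsum_eq0 => l; apply: H; rewrite Hi. Qed.

Lemma fsum2_zrange (F : int -> int -> V) M : box2 F M ->
  fsum (fun i => fsum (F i)) = \sum_(i <- zrange M) \sum_(l <- zrange M) F i l.
Proof.
move=> H; rewrite (@eq_fsum _ _ (fun i => \sum_(l <- zrange M) F i l)) => [|i].
  by apply: fsum_zrange => i Hi; apply: big1 => l _; apply: H; rewrite Hi.
by apply: fsum_zrange => l Hl; apply: H; rewrite Hl orbT.
Qed.

Lemma fsum2_exchange (F : int -> int -> V) M : box2 F M ->
  fsum (fun i => fsum (fun l => F i l)) = fsum (fun l => fsum (fun i => F i l)).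
Proof.
move=> H; rewrite (fsum2_zrange H) (@fsum2_zrange (fun l i => F i l) M).
  exact: exchange_big.
by move=> i l Hil; apply: H; rewrite orbC.
Qed.

Lemma fsum2D (F G : int -> int -> V) M N : box2 F M -> box2 G N ->
  fsum (fun i => fsum (fun l => F i l + G i l)) =
  fsum (fun i => fsum (F i)) + fsum (fun i => fsum (G i)).
Proof.
move=> HF HG; rewrite -fsumD; [|exact: box2_fin_supp_fsum HF|exact: box2_fin_supp_fsum HG].
by apply: eq_fsum => i; rewrite -fsumD; [|exact: box2_fin_supp HF|exact: box2_fin_supp HG].
Qed.

Lemma fsum4_exchange (T : int -> int -> int -> int -> V) M : box4 T M ->
  fsum (fun a => fsum (fun b => fsum (fun i => fsum (fun l => T a b i l)))) =
  fsum (fun i => fsum (fun l => fsum (fun a => fsum (fun b => T a b i l)))).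
Proof.
have fsum4E (U : int -> int -> int -> int -> V) : box4 U M ->
    fsum (fun a => fsum (fun b => fsum (fun i => fsum (fun l => U a b i l)))) =
    \sum_(a <- zrange M) \sum_(b <- zrange M) \sum_(i <- zrange M)
      \sum_(l <- zrange M) U a b i l.
  move=> HU; rewrite (@eq_fsum _ _ (fun a => fsum (fun b =>
      \sum_(i <- zrange M) \sum_(l <- zrange M) U a b i l))) => [|a].
    rewrite (@fsum2_zrange _ M) // => a b Hab; apply: big1 => i _; apply: big1 => l _.
    by apply: HU; case/orP: Hab => ->; rewrite ?orbT.
  apply: eq_fsum => b; apply: fsum2_zrange => i l Hil.
  by apply: HU; rewrite Hil !orbT.
move=> H; rewrite fsum4E // fsum4E; last first.
  by move=> i l a b; case/or4P => Hx; apply: H; rewrite Hx ?orbT.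
under eq_bigr do rewrite exchange_big /=.
rewrite [LHS]exchange_big /=; apply: eq_bigr => i _.
under eq_bigr do rewrite exchange_big /=.
by rewrite [LHS]exchange_big.
Qed.

End MultipleSums.

Lemma fsum2_morph (V V' : zmodType) (h : V -> V') (F : int -> int -> V) M :
  h 0 = 0 -> {morph h : x y / x + y} -> box2 F M ->
  h (fsum (fun i => fsum (F i))) = fsum (fun i => fsum (fun l => h (F i l))).
Proof.
move=> h0 hD HB; rewrite -fsum_morph //; last exact: box2_fin_supp_fsum HB.
by apply: eq_fsum => i; rewrite (fsum_morph (f := F i)) //; exact: box2_fin_supp HB.
Qed.

Lemma neq0_scaler (K : fieldType) (V : lmodType K) (c : K) (v : V) :
  c *: v != 0 -> c != 0 /\ v != 0.
Proof. by rewrite scaler_eq0 negb_or => /andP. Qed.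

Lemma neq0_mulf (K : fieldType) (c d : K) : c * d != 0 -> c != 0 /\ d != 0.
Proof. by rewrite mulf_eq0 negb_or => /andP. Qed.

Lemma neq0_lbound (V : zmodType) (u : int -> V) N k :
  (forall n, n < N -> u n = 0) -> u k != 0 -> N <= k.
Proof. by move=> H; apply: contraR; rewrite -ltNge => /H ->; rewrite eqxx. Qed.

Section Laurent.
Variable F : fieldType.
Implicit Types u v w : int -> F.

Definition conv1 u v : int -> F := fun k => fsum (fun l => u l * v (k - l)).
Definition delta1 : int -> F := fun k => (k == 0)%:R.

Lemma conv1_fin_supp u v Nu Nv k :
  (forall n, n < Nu -> u n = 0) -> (forall n, n < Nv -> v n = 0) ->
  fin_supp (fun l => u l * v (k - l)).
Proof.
move=> Hu Hv; apply: (@fin_supp_itv _ _ Nu (k - Nv)) => l /neq0_mulf [h1 h2].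
have := neq0_lbound Hu h1; have := neq0_lbound Hv h2; lia.
Qed.

Lemma conv1C u v : conv1 u v = conv1 v u.
Proof.
apply: functional_extensionality => k; rewrite /conv1 -[LHS](fsum_reflect _ k).
by apply: eq_fsum => l; rewrite subKr mulrC.
Qed.

Lemma conv1A u v w : lbounded u -> lbounded v -> lbounded w ->
  conv1 u (conv1 v w) = conv1 (conv1 u v) w.
Proof.
move=> [Nu Hu] [Nv Hv] [Nw Hw]; apply: functional_extensionality => k.
have E1 : conv1 u (conv1 v w) k =
    fsum (fun l => fsum (fun m => u l * (v m * w (k - l - m)))).
  apply: eq_fsum => l; rewrite -(fsum_morph (h := fun x => u l * x)) ?mulr0 //.
    by move=> x y; rewrite mulrDr.
  exact: conv1_fin_supp Hv Hw.
have E2 : conv1 (conv1 u v) w k =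
    fsum (fun a => fsum (fun l => u l * v (a - l) * w (k - a))).
  apply: eq_fsum => a; rewrite -(fsum_morph (h := fun x => x * w (k - a))) ?mul0r //.
    by move=> x y; rewrite mulrDl.
  exact: conv1_fin_supp Hu Hv.
rewrite E1 E2 [RHS](@fsum2_exchange _ _
    (absz Nu + absz (k - Nw - Nv)%R + absz (Nu + Nv)%R + absz (k - Nw)%R)%N).
  apply: eq_fsum => l; rewrite -[RHS](fsum_shift _ l); apply: eq_fsum => m.
  by rewrite /= addrK mulrA; congr (_ * w _); lia.
move=> a l Hx; apply/eqP; apply: contraTT Hx => /neq0_mulf [/neq0_mulf [h1 h2] h3].
have := neq0_lbound Hu h1; have := neq0_lbound Hv h2; have := neq0_lbound Hw h3.
by move=> *; apply/norP; split; rewrite -leqNgt; lia.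
Qed.

Lemma conv1_delta v : conv1 delta1 v = v.
Proof.
apply: functional_extensionality => k; rewrite /conv1 (@fsum_delta _ _ 0).
  by rewrite /delta1 eqxx mul1r subr0.
by move=> l hl; rewrite /delta1 (negbTE hl) mul0r.
Qed.

Lemma conv1Dl u v w : lbounded u -> lbounded v -> lbounded w ->
  conv1 (fun k => u k + v k) w = fun k => conv1 u w k + conv1 v w k.
Proof.
move=> [Nu Hu] [Nv Hv] [Nw Hw]; apply: functional_extensionality => k.
rewrite /conv1 -fsumD; [|exact: conv1_fin_supp Hu Hw|exact: conv1_fin_supp Hv Hw].
by apply: eq_fsum => l; rewrite mulrDl.
Qed.

Section Inverse.
Variables (u : int -> F) (k0 : int).
Hypothesis u_low : forall k, k < k0 -> u k = 0.
Hypothesis u_lead : u k0 != 0.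

(* The coefficients of the inverse solve the triangular system
   sum_(s <= t) u (k0 + s) * inv_coef (t - s) = (t == 0), read off one by one. *)
Fixpoint inv_coefs (t : nat) : seq F :=
  if t is t'.+1 then
    let p := inv_coefs t' in
    rcons p (- (u k0)^-1 * \sum_(s < t'.+1) u (k0 + (s.+1)%:Z) * nth 0 p (t' - s))
  else [:: (u k0)^-1].

Lemma size_inv_coefs t : size (inv_coefs t) = t.+1.
Proof. by elim: t => //= t IH; rewrite size_rcons IH. Qed.

Lemma nth_inv_coefs t t' i : (i <= t)%N -> (t <= t')%N ->
  nth 0 (inv_coefs t') i = nth 0 (inv_coefs t) i.
Proof.
move=> hi; elim: t' => [|t' IH] ht; first by have -> : t = 0%N by lia.
case: (eqVneq t t'.+1) => [->|hne] //.
by rewrite /= nth_rcons size_inv_coefs ifT ?IH //; lia.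
Qed.

Definition inv_coef (t : nat) : F := nth 0 (inv_coefs t) t.

Lemma inv_coefS t :
  inv_coef t.+1 = - (u k0)^-1 * \sum_(s < t.+1) u (k0 + (s.+1)%:Z) * inv_coef (t - s).
Proof.
rewrite /inv_coef /= nth_rcons size_inv_coefs ltnn eqxx; congr (_ * _).
by apply: eq_bigr => s _; rewrite (@nth_inv_coefs (t - s) t) //; lia.
Qed.

Definition inv_series : int -> F :=
  fun k => if k < - k0 then 0 else inv_coef (absz (k + k0)).

Lemma inv_series_low k : k < - k0 -> inv_series k = 0.
Proof. by rewrite /inv_series => ->. Qed.

Lemma conv1_inv_series : conv1 u inv_series = delta1.
Proof.
apply: functional_extensionality => m; case: (ltrP m 0) => hm.
  rewrite /delta1 (_ : (m == 0) = false); last by lia.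
  apply: fsum_eq0 => l; case: (ltrP l k0) => hl; first by rewrite u_low ?mul0r.
  by rewrite inv_series_low ?mulr0 //; lia.
have [t ->] : exists t : nat, m = t%:Z by exists (absz m); lia.
rewrite /conv1 (@fsumE _ _ [seq k0 + s%:Z | s <- iota 0 t.+1]); first last.
- move=> l /neq0_mulf [h1 h2]; have h3 := neq0_lbound u_low h1.
  apply/mapP; exists (absz (l - k0)); last by lia.
  move: h2; rewrite /inv_series mem_iota.
  by case: (ltrP (t%:Z - l) (- k0)) => [_|h2 _]; [rewrite eqxx|lia].
- by rewrite map_inj_uniq ?iota_uniq // => x y /= h; lia.
rewrite big_map -[iota 0 t.+1]/(index_iota 0 t.+1) big_mkord.
have E (s : 'I_t.+1) : inv_series (t%:Z - (k0 + (s : nat)%:Z)) = inv_coef (t - s).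
  by rewrite /inv_series ifF; [congr inv_coef|]; have := ltn_ord s; lia.
under eq_bigr do rewrite E.
rewrite /delta1; case: t E => [|t] E.
  by rewrite big_ord1 /= addr0 mulfV.
rewrite big_ord_recl /= addr0 subn0 inv_coefS mulrA mulrN mulfV // mulNr mul1r.
rewrite addrC; apply/eqP; rewrite subr_eq0; apply/eqP/eq_bigr => s _.
by rewrite /bump /= add1n subSS.
Qed.

End Inverse.

Lemma conv1_invertible u : lbounded u -> (exists k, u k != 0) ->
  exists v, lbounded v /\ conv1 u v = delta1.
Proof.
move=> [N HN] [k Hk].
have ex : exists t : nat, u (N + t%:Z) != 0.
  exists (absz (k - N)); have h := neq0_lbound HN Hk.
  by rewrite (_ : N + _ = k) //; lia.
case: (ex_minnP ex) => t0 Ht0 Hmin.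
have Hu : forall k, k < N + t0%:Z -> u k = 0.
  move=> k' hk'; case: (ltrP k' N) => h; first exact: HN.
  apply/eqP; apply: contraTT hk' => nz.
  have := Hmin (absz (k' - N)); rewrite (_ : N + _ = k'); last by lia.
  by move=> /(_ nz); rewrite -leNgt; lia.
exists (inv_series u (N + t0%:Z)); split; last exact: conv1_inv_series.
by exists (- (N + t0%:Z)) => n; apply: inv_series_low.
Qed.

Lemma conv1_low u v m : (forall i, i < 0 -> u i = 0) -> (forall i, i < m -> v i = 0) ->
  conv1 u v m = u 0 * v m.
Proof.
move=> Hu Hv; rewrite /conv1 (@fsum_delta _ _ 0); first by rewrite subr0.
move=> l hl; case: (ltrP l 0) => h; first by rewrite Hu ?mul0r.
by rewrite Hv ?mulr0 //; lia.
Qed.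

Lemma conv1_inv_low u v : lbounded v -> (forall i, i < 0 -> u i = 0) -> u 0 != 0 ->
  conv1 u v = delta1 -> (forall i, i < 0 -> v i = 0) /\ v 0 = (u 0)^-1.
Proof.
move=> [N HN] Hu Hu0 E.
have neg : forall i, i < 0 -> v i = 0.
  suff S : forall t : nat, forall i, i < N + t%:Z -> i < 0 -> v i = 0.
    by move=> i hi; apply: (S (absz (i - N)).+1); lia.
  elim=> [|t IH] i hi hi0; first by apply: HN; lia.
  case: (ltrP i (N + t%:Z)) => h; first exact: IH.
  have := congr1 (fun f => f i) E; rewrite /= (conv1_low Hu (m := i)); last first.
    by move=> i' hi'; apply: IH; lia.
  rewrite /delta1 (_ : i == 0 = false); last by lia.
  by move/eqP; rewrite mulf_eq0 (negbTE Hu0) /= => /eqP.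
split => //.
have := congr1 (fun f => f 0) E; rewrite /= (conv1_low Hu (m := 0)) // /delta1 eqxx /=.
by move=> H; rewrite -[v 0]mul1r -(mulVf Hu0) -mulrA H mulr1.
Qed.

End Laurent.

Record laurent (F : fieldType) := Laurent { lcoef : int -> F; lcoefP : lbounded lcoef }.

HB.instance Definition _ (F : fieldType) := gen_eqMixin (laurent F).
HB.instance Definition _ (F : fieldType) := gen_choiceMixin (laurent F).

Section LaurentField.
Variable F : fieldType.
Implicit Types x y z : laurent F.

Lemma lcoef_inj x y : lcoef x = lcoef y -> x = y.
Proof.
case: x => u pu; case: y => v pv /= E; subst v.
by rewrite (proof_irrelevance _ pu pv).
Qed.

Lemma lbounded0 : lbounded (fun _ : int => (0 : F)). Proof. by exists 0. Qed.

Lemma lboundedD (u v : int -> F) : lbounded u -> lbounded v ->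
  lbounded (fun k => u k + v k).
Proof.
move=> [N1 H1] [N2 H2]; exists (- (absz N1 + absz N2)%:Z) => n hn.
by rewrite H1 ?H2 ?addr0 //; lia.
Qed.

Lemma lboundedN (u : int -> F) : lbounded u -> lbounded (fun k => - u k).
Proof. by move=> [N H]; exists N => n /H ->; rewrite oppr0. Qed.

Lemma lbounded_delta1 : lbounded (@delta1 F).
Proof. by exists 0 => n hn; rewrite /delta1 (_ : n == 0 = false) //; lia. Qed.

Lemma lbounded_conv1 (u v : int -> F) : lbounded u -> lbounded v -> lbounded (conv1 u v).
Proof.
move=> [N1 H1] [N2 H2]; exists (N1 + N2) => k hk; apply: fsum_eq0 => l.
case: (ltrP l N1) => hl; first by rewrite H1 ?mul0r.
by rewrite H2 ?mulr0 //; lia.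
Qed.

Definition lzero : laurent F := Laurent lbounded0.
Definition ladd x y : laurent F := Laurent (lboundedD (lcoefP x) (lcoefP y)).
Definition lopp x : laurent F := Laurent (lboundedN (lcoefP x)).
Definition lmul x y : laurent F := Laurent (lbounded_conv1 (lcoefP x) (lcoefP y)).
Definition lone : laurent F := Laurent lbounded_delta1.

Lemma laddA : associative ladd.
Proof. by move=> x y z; apply/lcoef_inj/functional_extensionality => k /=; rewrite addrA. Qed.

Lemma laddC : commutative ladd.
Proof. by move=> x y; apply/lcoef_inj/functional_extensionality => k /=; rewrite addrC. Qed.

Lemma ladd0 : left_id lzero ladd.
Proof. by move=> x; apply/lcoef_inj/functional_extensionality => k /=; rewrite add0r. Qed.

Lemma laddN : left_inverse lzero lopp ladd.
Proof. by move=> x; apply/lcoef_inj/functional_extensionality => k /=; rewrite addNr. Qed.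

HB.instance Definition _ := GRing.isZmodule.Build (laurent F) laddA laddC ladd0 laddN.

Lemma lmulA : associative lmul.
Proof. by move=> x y z; apply: lcoef_inj; rewrite /= conv1A //; apply: lcoefP. Qed.

Lemma lmulC : commutative lmul.
Proof. by move=> x y; apply: lcoef_inj; rewrite /= conv1C. Qed.

Lemma lmul1 : left_id lone lmul.
Proof. by move=> x; apply: lcoef_inj; rewrite /= conv1_delta. Qed.

Lemma lmulDl : left_distributive lmul (@GRing.add (laurent F)).
Proof. by move=> x y z; apply: lcoef_inj; rewrite /= conv1Dl //; apply: lcoefP. Qed.

Lemma lone_neq0 : lone != 0.
Proof.
apply/eqP => /(congr1 (fun x => lcoef x 0)) /=; rewrite /delta1 eqxx /=.
by move/eqP; rewrite oner_eq0.
Qed.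

HB.instance Definition _ :=
  GRing.Zmodule_isComNzRing.Build (laurent F) lmulA lmulC lmul1 lmulDl lone_neq0.

Lemma lcoefM x y : lcoef (x * y) = conv1 (lcoef x) (lcoef y). Proof. by []. Qed.

Definition linv x : laurent F :=
  match excluded_middle_informative
          (exists v, lbounded v /\ conv1 (lcoef x) v = @delta1 F) with
  | left H =>
      Laurent (proj1 (proj2_sig (constructive_indefinite_description _ H)))
  | right _ => 0
  end.

Lemma lmulVf x : x != 0 -> linv x * x = 1.
Proof.
move=> nz; rewrite /linv; case: excluded_middle_informative => [H|[]].
  case: (constructive_indefinite_description _ H) => v [lv Hv] /=.
  by apply: lcoef_inj; rewrite lcoefM /= conv1C Hv.
apply: conv1_invertible; first exact: lcoefP.
apply: contrapT => Hall; move/eqP: nz; apply; apply: lcoef_inj.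
apply: functional_extensionality => k; apply/eqP; apply: contrapT => Hk.
by apply: Hall; exists k; apply/negP.
Qed.

Lemma linv0 : linv 0 = 0.
Proof.
rewrite /linv; case: excluded_middle_informative => // H; exfalso; case: H => v [_ Hv].
have : conv1 (lcoef (0 : laurent F)) v 0 = delta1 F 0 by rewrite Hv.
rewrite /delta1 eqxx /= /conv1 fsum_eq0 => [|l]; last by rewrite mul0r.
by move/eqP; rewrite eq_sym oner_eq0.
Qed.

HB.instance Definition _ := GRing.ComNzRing_isField.Build (laurent F) lmulVf linv0.

End LaurentField.

Lemma lcoef_fsum (F : fieldType) (f : int -> laurent F) k : fin_supp f ->
  lcoef (fsum f) k = fsum (fun i => lcoef (f i) k).
Proof. by move=> fs; rewrite -(fsum_morph (h := fun x : laurent F => lcoef x k)). Qed.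

(* [F j k] is the coefficient of [z^j x^k] of an element of [V((x))((z))]. *)
Definition laurent2 (V : zmodType) (F : int -> int -> V) :=
  (exists N, forall j k, j < N -> F j k = 0) /\ forall j, lbounded (F j).

Lemma lbounded_rows_uniform (V : zmodType) (F : int -> int -> V) :
  (forall j, lbounded (F j)) ->
  forall a b, exists m, forall j k, a <= j <= b -> k < m -> F j k = 0.
Proof.
move=> H a b.
suff S (t : nat) : exists m, forall j k, a <= j <= a + t%:Z -> k < m -> F j k = 0.
  by have [m Hm] := S (absz (b - a)); exists m => j k Hj; apply: Hm; lia.
elim: t => [|t [m Hm]].
  have [L HL] := H a; exists L => j k Hj hk.
  have -> : j = a by lia.
  exact: HL.
have [L HL] := H (a + t.+1%:Z).
exists (Num.min m L) => j k Hj hk; case: (lerP j (a + t%:Z)) => hj.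
  by apply: Hm; lia.
have -> : j = a + t.+1%:Z by lia.
by apply: HL; lia.
Qed.

Lemma neq0_row_lbound (V : zmodType) (F : int -> int -> V) a b m j k :
  (forall j k, a <= j <= b -> k < m -> F j k = 0) -> a <= j <= b -> F j k != 0 -> m <= k.
Proof. by move=> H hj; apply: contraR; rewrite -ltNge => /(H _ _ hj) ->; rewrite eqxx. Qed.

Lemma laurent2_sum (V : zmodType) (I : Type) (r : seq I) (F : I -> int -> int -> V) :
  (forall i, laurent2 (F i)) -> laurent2 (fun j k => \sum_(i <- r) F i j k).
Proof.
move=> H; elim: r => [|x r [[N HN] HL]].
  by split; [exists 0 | exists 0] => *; rewrite big_nil.
have [[Nx HNx] HLx] := H x; split.
  exists (Num.min Nx N) => j k hj; rewrite big_cons HNx ?HN ?addr0 //; lia.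
move=> j; have [L1 HL1] := HLx j; have [L2 HL2] := HL j.
by exists (Num.min L1 L2) => k hk; rewrite big_cons HL1 ?HL2 ?addr0 //; lia.
Qed.

Section Conv2.
Variable K : fieldType.

Definition conv2 (V : lmodType K) (A : int -> int -> K) (F : int -> int -> V) :=
  fun j k => fsum (fun i => fsum (fun l => A i l *: F (j - i) (k - l))).

Lemma mulKK_conv2 (A B : int -> int -> K) : mulKK A B = @conv2 K^o A B.
Proof. by []. Qed.

Lemma mulKW_conv2 (V : lmodType K) (A : int -> int -> K) (S : int -> int -> V -> V) j k w :
  mulKW A S j k w = conv2 A (fun a b => S a b w) j k.
Proof. by []. Qed.

Variable V : lmodType K.
Implicit Types (A B : int -> int -> K) (F G : int -> int -> V).

Lemma conv2_box A F j k : laurent2 A -> laurent2 F ->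
  exists M, box2 (fun i l => A i l *: F (j - i) (k - l)) M.
Proof.
move=> [[NA HA] HA'] [[NF HF] HF'].
have [mA HmA] := lbounded_rows_uniform HA' NA (j - NF).
have [mF HmF] := lbounded_rows_uniform HF' NF (j - NA).
exists (absz NA + absz (j - NF) + absz mA + absz (k - mF))%N.
apply: (@box2_itv _ _ NA (j - NF) mA (k - mF)) => i l /neq0_scaler [h1 h2].
have hi := neq0_lbound (HA^~ l) h1; have hi' := neq0_lbound (HF^~ (k - l)) h2.
have u1 : mA <= l by apply: (neq0_row_lbound HmA _ h1); lia.
have u2 : mF <= k - l by apply: (neq0_row_lbound HmF _ h2); lia.
by apply/andP; split; apply/andP; split; lia.
Qed.

Lemma laurent2_conv2 A F : laurent2 A -> laurent2 F -> laurent2 (conv2 A F).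
Proof.
move=> LA LF; have [[NA HA] HA'] := LA; have [[NF HF] HF'] := LF; split.
  exists (NA + NF) => j k hj; apply: fsum_eq0 => i; apply: fsum_eq0 => l.
  case: (ltrP i NA) => hi; first by rewrite HA ?scale0r.
  by rewrite HF ?scaler0 //; lia.
move=> j.
have [mA HmA] := lbounded_rows_uniform HA' NA (j - NF).
have [mF HmF] := lbounded_rows_uniform HF' NF (j - NA).
exists (mA + mF) => k hk; apply: fsum_eq0 => i; apply: fsum_eq0 => l.
apply/eqP; apply: contraTT hk => /neq0_scaler [h1 h2].
have hi := neq0_lbound (HA^~ l) h1; have hi' := neq0_lbound (HF^~ (k - l)) h2.
have u1 : mA <= l by apply: (neq0_row_lbound HmA _ h1); lia.
have u2 : mF <= k - l by apply: (neq0_row_lbound HmF _ h2); lia.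
by rewrite -leNgt; lia.
Qed.

Lemma conv2D A F G j k : laurent2 A -> laurent2 F -> laurent2 G ->
  conv2 A (fun a b => F a b + G a b) j k = conv2 A F j k + conv2 A G j k.
Proof.
move=> LA LF LG; have [M1 H1] := conv2_box j k LA LF; have [M2 H2] := conv2_box j k LA LG.
by rewrite /conv2 -(fsum2D H1 H2); do 2 apply: eq_fsum => ?; rewrite scalerDr.
Qed.

Lemma conv2_sum (I : Type) (r : seq I) A (F : I -> int -> int -> V) j k :
  laurent2 A -> (forall i, laurent2 (F i)) ->
  conv2 A (fun a b => \sum_(i <- r) F i a b) j k = \sum_(i <- r) conv2 A (F i) j k.
Proof.
move=> LA LF; elim: r j k => [|x r IH] j k.
  by rewrite big_nil; do 2 apply: fsum_eq0 => ?; rewrite big_nil scaler0.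
rewrite big_cons -IH -conv2D //; last exact: laurent2_sum.
by do 2 apply: eq_fsum => ?; rewrite big_cons.
Qed.

Lemma conv2_oneKK F : conv2 (oneKK K) F = F.
Proof.
apply: functional_extensionality => j; apply: functional_extensionality => k.
rewrite /conv2 (@fsum_delta _ _ 0) => [|i hi]; last first.
  by apply: fsum_eq0 => l; rewrite /oneKK (negbTE hi) scale0r.
rewrite (@fsum_delta _ _ 0) => [|l hl]; first by rewrite /oneKK /= scale1r !subr0.
by rewrite /oneKK /= (negbTE hl) scale0r.
Qed.

End Conv2.

Lemma conv2A (K : fieldType) (V : lmodType K) (A B : int -> int -> K)
    (F : int -> int -> V) : laurent2 A -> laurent2 B -> laurent2 F ->
  conv2 A (conv2 B F) = conv2 (mulKK A B) F.
Proof.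
move=> LA LB LF.
apply: functional_extensionality => j; apply: functional_extensionality => k.
have E1 : conv2 A (conv2 B F) j k = fsum (fun i => fsum (fun l => fsum (fun a =>
    fsum (fun b => A i l *: (B a b *: F (j - i - a) (k - l - b)))))).
  apply: eq_fsum => i; apply: eq_fsum => l.
  have [M HM] := conv2_box (j - i) (k - l) LB LF.
  by rewrite (fsum2_morph (h := fun v => A i l *: v) _ _ HM) ?scaler0 // => x y;
    rewrite scalerDr.
have E2 : conv2 (mulKK A B) F j k = fsum (fun a => fsum (fun b => fsum (fun i =>
    fsum (fun l => (A i l * B (a - i) (b - l)) *: F (j - a) (k - b))))).
  apply: eq_fsum => a; apply: eq_fsum => b.
  have [M HM] := @conv2_box K K^o A B a b LA LB.
  rewrite mulKK_conv2 (fsum2_morph (h := fun c : K^o => (c : K) *: F (j - a) (k - b))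
    _ _ HM) ?scale0r // => x y.
  by rewrite scalerDl.
rewrite E1 E2.
have [[NA HA] HA'] := LA; have [[NB HB] HB'] := LB; have [[NF HF] HF'] := LF.
have [mA HmA] := lbounded_rows_uniform HA' NA (j - NF - NB).
have [mB HmB] := lbounded_rows_uniform HB' NB (j - NF - NA).
have [mF HmF] := lbounded_rows_uniform HF' NF (j - NA - NB).
rewrite [RHS](fsum4_exchange (box4_itv (a1 := NA + NB) (b1 := j - NF) (a2 := mA + mB)
  (b2 := k - mF) (a3 := NA) (b3 := j - NF - NB) (a4 := mA) (b4 := k - mF - mB) _)).
  apply: eq_fsum => i; apply: eq_fsum => l.
  rewrite -[RHS](fsum_shift _ i); apply: eq_fsum => a.
  rewrite -[RHS](fsum_shift _ l); apply: eq_fsum => b.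
  by rewrite /= scalerA !addrK; congr (_ *: F _ _); lia.
move=> a b i l /neq0_scaler [/neq0_mulf [h1 h2] h3].
have q1 := neq0_lbound (HA^~ l) h1; have q2 := neq0_lbound (HB^~ (b - l)) h2.
have q3 := neq0_lbound (HF^~ (k - b)) h3.
have u1 : mA <= l by apply: (neq0_row_lbound HmA _ h1); lia.
have u2 : mB <= b - l by apply: (neq0_row_lbound HmB _ h2); lia.
have u3 : mF <= k - b by apply: (neq0_row_lbound HmF _ h3); lia.
by split; apply/andP; split; lia.
Qed.

Section Laurent2Field.
Variable K : fieldType.
Notation L2 := (laurent (laurent K)).
Implicit Types (X Y : L2) (A B : int -> int -> K).

Definition coef2 X : int -> int -> K := fun j k => lcoef (lcoef X j) k.

Lemma laurent2_coef2 X : laurent2 (coef2 X).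
Proof.
split; last by move=> j; exact: lcoefP.
by have [N HN] := lcoefP X; exists N => j k hj; rewrite /coef2 HN.
Qed.

Lemma coef2_inj : injective coef2.
Proof.
move=> X Y E; apply/lcoef_inj/functional_extensionality => j.
apply/lcoef_inj/functional_extensionality => k; exact: (congr1 (fun f => f j k) E).
Qed.

Lemma coef2_1 : coef2 1 = oneKK K.
Proof.
by do 2 apply: functional_extensionality => ?; rewrite /coef2 /= /delta1 /oneKK; case: eqP.
Qed.

Lemma coef2M X Y : coef2 (X * Y) = mulKK (coef2 X) (coef2 Y).
Proof.
apply: functional_extensionality => j; apply: functional_extensionality => k.
rewrite /coef2 lcoefM /conv1 lcoef_fsum; last first.
  by have [N1 H1] := lcoefP X; have [N2 H2] := lcoefP Y; exact: conv1_fin_supp H1 H2.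
by apply: eq_fsum => i; rewrite lcoefM.
Qed.

Definition row_laurent A (H : laurent2 A) (j : int) : laurent K := Laurent (proj2 H j).

Lemma row_laurent_lbounded A (H : laurent2 A) : lbounded (row_laurent H).
Proof.
have [N HN] := proj1 H; exists N => j hj.
by apply/lcoef_inj/functional_extensionality => k; rewrite /= HN.
Qed.

(* Junk value [0] when [A] does not have the support of an element of [K((x))((z))]. *)
Definition of_coef2 A : L2 :=
  match excluded_middle_informative (laurent2 A) with
  | left H => Laurent (row_laurent_lbounded H)
  | right _ => 0
  end.

Lemma of_coef2K A : laurent2 A -> coef2 (of_coef2 A) = A.
Proof. by move=> H; rewrite /of_coef2; case: excluded_middle_informative. Qed.

Lemma coef2K X : of_coef2 (coef2 X) = X.
Proof. by apply: coef2_inj; rewrite of_coef2K //; apply: laurent2_coef2. Qed.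

Lemma of_coef2M A B : laurent2 A -> laurent2 B ->
  of_coef2 (mulKK A B) = of_coef2 A * of_coef2 B.
Proof. by move=> HA HB; rewrite -[RHS]coef2K coef2M !of_coef2K. Qed.

Lemma of_coef2_eq0 A : laurent2 A -> of_coef2 A = 0 -> A = fun _ _ => 0.
Proof. by move=> HA E; rewrite -(of_coef2K HA) E. Qed.

Lemma invKK_inverse A : laurent2 A -> A <> (fun _ _ => 0) ->
  laurent2 (invKK A) /\ of_coef2 (invKK A) = (of_coef2 A)^-1.
Proof.
move=> HA nz; have ne : of_coef2 A != 0 by apply/eqP => /(of_coef2_eq0 HA).
have ex : exists B, isKxz B /\ forall j k, mulKK A B j k = oneKK K j k.
  exists (coef2 (of_coef2 A)^-1); split; first exact: laurent2_coef2.
  by move=> j k; rewrite -{1}(of_coef2K HA) -coef2M mulfV // coef2_1.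
rewrite /invKK; case: excluded_middle_informative => // H.
case: (constructive_indefinite_description _ H) => B [HB EB] /=; split => //.
have EB' : mulKK A B = oneKK K by do 2 apply: functional_extensionality => ?; apply: EB.
apply: (mulfI ne); rewrite mulfV // -of_coef2M // EB'.
by rewrite -coef2_1 coef2K.
Qed.

End Laurent2Field.

Lemma coef2_exp_support (K : fieldType) (X : laurent (laurent K)) (e : int) (D J : nat) :
  (forall j k, j < 0 -> coef2 X j k = 0) ->
  (forall k, k < e -> coef2 X 0 k = 0) ->
  (forall i k, 0 < i <= J%:Z -> k < e - D%:Z -> coef2 X i k = 0) ->
  forall n : nat, (forall j k, j < 0 -> coef2 (X ^+ n) j k = 0) /\
    (forall j k, 0 <= j <= J%:Z -> k < n%:Z * e - j * D%:Z -> coef2 (X ^+ n) j k = 0).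
Proof.
move=> H1 H2 H3; elim=> [|n [IH1 IH2]].
  rewrite expr0 coef2_1; split => j k hj; rewrite /oneKK.
    by rewrite (_ : j == 0 = false) //; lia.
  by move=> hk; rewrite (_ : k == 0 = false) ?andbF //; nia.
rewrite exprS coef2M; split => j k hj.
  apply: fsum_eq0 => i; apply: fsum_eq0 => l.
  case: (ltrP i 0) => hi; first by rewrite H1 ?mul0r.
  by rewrite IH1 ?mulr0 //; lia.
move=> hk; apply: fsum_eq0 => i; apply: fsum_eq0 => l.
case: (ltrP i 0) => hi; first by rewrite H1 ?mul0r.
case: (ltrP (j - i) 0) => hji; first by rewrite IH1 ?mulr0.
case: (eqVneq i 0) => [->|hi0].
  case: (ltrP l e) => hl; first by rewrite H2 ?mul0r.
  by rewrite IH2 ?mulr0 //; [lia|nia].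
case: (ltrP l (e - D%:Z)) => hl; first by rewrite H3 ?mul0r //; lia.
by rewrite IH2 ?mulr0 //; [lia|nia].
Qed.

Section PhiPowers.
Variables (K : fieldType) (phi : int -> int -> K).
Hypothesis phi_low : forall j k, j < 0 -> phi j k = 0.
Hypothesis phi_rows : forall j, lbounded (phi j).
Hypothesis phi_at0 : forall k, phi 0 k = (k == 1)%:R.

Notation Phi := (of_coef2 phi).

Lemma laurent2_phi : laurent2 phi.
Proof. by split => //; exists 0. Qed.

Lemma coef2_Phi : coef2 Phi = phi.
Proof. exact: of_coef2K laurent2_phi. Qed.

Lemma phi_neq0 : phi <> (fun _ _ => 0).
Proof. by move=> /(congr1 (fun f => f 0 1)) /eqP; rewrite phi_at0 /= oner_eq0. Qed.

Lemma Phi_neq0 : Phi != 0.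
Proof. by apply: contra_notN phi_neq0 => /eqP /(of_coef2_eq0 laurent2_phi). Qed.

Lemma powKK_coef2 (m : int) : powKK phi m = coef2 (Phi ^ m).
Proof.
case: m => n.
  rewrite /powKK /exprz; elim: n => [|n IH] /=; first by rewrite expr0 coef2_1.
  by rewrite IH -[phi in mulKK phi _]coef2_Phi -coef2M -exprS.
rewrite /powKK /exprz -exprVn.
have [LI EI] := invKK_inverse laurent2_phi phi_neq0.
elim: n.+1 => [|t IH] /=; first by rewrite expr0 coef2_1.
by rewrite IH -(of_coef2K LI) -coef2M EI -exprS.
Qed.

(* [Phi = x + O(z)], hence [Phi^-1 = x^-1 + O(z)]. *)
Lemma coef2_Phi_inv_support :
  (forall j k, j < 0 -> coef2 (Phi^-1) j k = 0) /\
  (forall k, k < -1 -> coef2 (Phi^-1) 0 k = 0).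
Proof.
have E : conv1 (lcoef Phi) (lcoef (Phi^-1)) = delta1 (laurent K).
  by rewrite -lcoefM mulfV ?Phi_neq0.
have Hu : forall i, i < 0 -> lcoef Phi i = 0.
  move=> i hi; apply/lcoef_inj/functional_extensionality => k.
  by have := congr1 (fun f => f i k) coef2_Phi; rewrite /coef2 /= => ->; rewrite phi_low.
have Hx : forall l, lcoef (lcoef Phi 0) l = (l == 1)%:R.
  by move=> l; have := congr1 (fun f => f 0 l) coef2_Phi; rewrite /coef2 => ->.
have Hu0 : lcoef Phi 0 != 0.
  by apply/eqP => /(congr1 (fun x => lcoef x 1)) /=; rewrite Hx /= => /eqP; rewrite oner_eq0.
have [neg r0] := conv1_inv_low (lcoefP _) Hu Hu0 E.
split=> [j k hj|k hk]; first by rewrite /coef2 neg.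
rewrite /coef2 r0.
have Ey : conv1 (lcoef (lcoef Phi 0)) (lcoef (lcoef Phi 0)^-1) = delta1 K.
  by rewrite -lcoefM mulfV.
have := congr1 (fun f => f (k + 1)) Ey; rewrite /= /conv1 (@fsum_delta _ _ 1).
  by rewrite Hx eqxx mul1r /delta1 addrK (_ : k + 1 == 0 = false) //; lia.
by move=> l hl; rewrite Hx (negbTE hl) mul0r.
Qed.

Lemma coef2_Phi_support :
  [/\ forall j k, j < 0 -> coef2 Phi j k = 0 & forall k, k < 1 -> coef2 Phi 0 k = 0].
Proof.
rewrite coef2_Phi; split=> [j k|k hk]; first exact: phi_low.
by rewrite phi_at0 (_ : k == 1 = false) //; lia.
Qed.

Lemma coef2_Phi_exp_neg (m : int) j k : j < 0 -> coef2 (Phi ^ m) j k = 0.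
Proof.
move=> hj; have [Q1 Q2] := coef2_Phi_inv_support; have [P1 P2] := coef2_Phi_support.
case: m => n.
  have [R _] := @coef2_exp_support _ Phi 1 0 0 P1 P2 (fun i k h => ltac:(lia)) n.
  by rewrite /exprz R.
have [R _] := @coef2_exp_support _ (Phi^-1) (-1) 0 0 Q1 Q2 (fun i k h => ltac:(lia)) n.+1.
by rewrite /exprz -exprVn R.
Qed.

Lemma coef2_Phi_exp_bound (J : nat) : exists C : nat, forall (m : int) j k,
  0 <= j <= J%:Z -> k < m - C%:Z -> coef2 (Phi ^ m) j k = 0.
Proof.
have [Q1 Q2] := coef2_Phi_inv_support; have [P1 P2] := coef2_Phi_support.
have [m1 Hm1] := lbounded_rows_uniform (proj2 (laurent2_coef2 Phi)) 1 J%:Z.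
have [m2 Hm2] := lbounded_rows_uniform (proj2 (laurent2_coef2 (Phi^-1))) 1 J%:Z.
pose D1 := absz (1 - m1)%R; pose D2 := absz (-1 - m2)%R.
have P3 i k : 0 < i <= J%:Z -> k < 1 - D1%:Z -> coef2 Phi i k = 0.
  by move=> hi hk; apply: Hm1; rewrite /D1 in hk; lia.
have Q3 i k : 0 < i <= J%:Z -> k < -1 - D2%:Z -> coef2 (Phi^-1) i k = 0.
  by move=> hi hk; apply: Hm2; rewrite /D2 in hk; lia.
exists (J * D1 + J * D2)%N => m j k hj; case: m => n hk.
  by have [_ R] := coef2_exp_support P1 P2 P3 n; rewrite /exprz R //; nia.
have [_ R] := coef2_exp_support Q1 Q2 Q3 n.+1.
by rewrite /exprz -exprVn R //; nia.
Qed.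

End PhiPowers.

Definition tr (V : Type) (F : int -> int -> V) : int -> int -> V := fun a b => F b a.

Section Lbounded2.
Variable V : zmodType.
Implicit Types F G : int -> int -> V.

Lemma lbounded2_neq0 F N m n :
  (forall m n, (m < N) || (n < N) -> F m n = 0) -> F m n != 0 -> N <= m /\ N <= n.
Proof. by move=> H nz; split; apply: contraR nz; rewrite -ltNge => h; rewrite H ?h ?orbT. Qed.

Lemma lbounded2_tr F : lbounded2 F -> lbounded2 (tr F).
Proof. by move=> [N H]; exists N => m n h; rewrite /tr H // orbC. Qed.

Lemma lbounded2_laurent2 F : lbounded2 F -> laurent2 F.
Proof.
move=> [N H]; split; first by exists N => j k h; rewrite H ?h.
by move=> j; exists N => k h; rewrite H ?h ?orbT.
Qed.

Lemma lbounded2_sum (I : Type) (r : seq I) (F : I -> int -> int -> V) :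
  (forall i, lbounded2 (F i)) -> lbounded2 (fun m n => \sum_(i <- r) F i m n).
Proof.
move=> H; elim: r => [|x r [N HN]]; first by exists 0 => m n _; rewrite big_nil.
have [Nx HNx] := H x; exists (Num.min Nx N) => m n h.
by rewrite big_cons HNx ?HN ?addr0 //; move: h => /orP[] h; apply/orP; [left|right|left|right]; lia.
Qed.

End Lbounded2.

Lemma lbounded2_conv2 (K : fieldType) (V : lmodType K) (A : int -> int -> K)
    (F : int -> int -> V) : lbounded2 A -> lbounded2 F -> lbounded2 (conv2 A F).
Proof.
move=> [NA HA] [NF HF]; exists (NA + NF) => j k h; apply: fsum_eq0 => i; apply: fsum_eq0 => l.
apply/eqP; apply: contraTT h => /neq0_scaler [h1 h2].
have [q1 q2] := lbounded2_neq0 HA h1; have [q3 q4] := lbounded2_neq0 HF h2.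
by rewrite negb_or -!leNgt; apply/andP; split; lia.
Qed.

(* The product of [V((x1, x2))], with [F m n] the coefficient of [x1^m x2^n]. *)
Definition conv12 (K : fieldType) (V : lmodType K) (f : int -> int -> K) (F : int -> int -> V) :=
  tr (conv2 (tr f) (tr F)).

Lemma conv12E (K : fieldType) (V : lmodType K) (f : int -> int -> K) (F : int -> int -> V) m n :
  conv12 f F m n = fsum (fun l => fsum (fun k => f k l *: F (m - k) (n - l))).
Proof. by []. Qed.

Section Substitution.
Variables (K : fieldType) (phi : int -> int -> K).
Hypothesis phi_low : forall j k, j < 0 -> phi j k = 0.
Hypothesis phi_rows : forall j, lbounded (phi j).
Hypothesis phi_at0 : forall k, phi 0 k = (k == 1)%:R.

Notation Phi := (of_coef2 phi).
Notation P m := (coef2 (Phi ^ m)).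

(* [x1 = phi(x, z), x2 = x]: [subst2 F j k] is the coefficient of [z^j x^k]. *)
Definition subst2 (V : lmodType K) (F : int -> int -> V) : int -> int -> V :=
  fun j k => fsum (fun m => fsum (fun n => P m j (k - n) *: F m n)).

Lemma Phi_exp_neq0_row m j k : P m j k != 0 -> 0 <= j.
Proof. by apply: contraR; rewrite -ltNge => h; rewrite coef2_Phi_exp_neg ?eqxx. Qed.

Lemma Phi_exp_neq0_bound (j0 : int) (C : nat) :
  (forall (m : int) j k, 0 <= j <= (absz j0)%:Z -> k < m - C%:Z -> P m j k = 0) ->
  forall m j k, j <= j0 -> P m j k != 0 -> m - C%:Z <= k.
Proof.
move=> HC m j k hj nz; have h0 := Phi_exp_neq0_row nz; apply: contraR nz; rewrite -ltNge => h.
by rewrite HC ?eqxx //; lia.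
Qed.

Lemma subst2_neg (V : lmodType K) (F : int -> int -> V) j k : j < 0 -> subst2 F j k = 0.
Proof.
by move=> hj; do 2 apply: fsum_eq0 => ?; rewrite coef2_Phi_exp_neg ?scale0r.
Qed.

Lemma subst2_box (V : lmodType K) (F : int -> int -> V) j k : lbounded2 F ->
  exists M, box2 (fun m n => P m j (k - n) *: F m n) M.
Proof.
move=> [N HN]; case: (ltrP j 0) => hj.
  by exists 0%N => m n _; rewrite coef2_Phi_exp_neg ?scale0r.
have [C HC] := coef2_Phi_exp_bound phi_low phi_rows phi_at0 (absz j).
exists (absz N + absz (k - N + C%:Z)%R + absz N + absz (k - N + C%:Z)%R)%N.
apply: box2_itv => m n /neq0_scaler [h1 h2].
have [q1 q2] := lbounded2_neq0 HN h2; have q3 := Phi_exp_neq0_bound HC (lexx j) h1.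
by apply/andP; split; apply/andP; split; lia.
Qed.

Lemma laurent2_subst2 (V : lmodType K) (F : int -> int -> V) :
  lbounded2 F -> laurent2 (subst2 F).
Proof.
move=> [N HN]; split; first by exists 0 => j k hj; apply: subst2_neg.
move=> j; case: (ltrP j 0) => hj; first by exists 0 => k _; apply: subst2_neg.
have [C HC] := coef2_Phi_exp_bound phi_low phi_rows phi_at0 (absz j).
exists (N + N - C%:Z) => k hk; apply: fsum_eq0 => m; apply: fsum_eq0 => n.
apply/eqP; apply: contraTT hk => /neq0_scaler [h1 h2].
have [q1 q2] := lbounded2_neq0 HN h2; have q3 := Phi_exp_neq0_bound HC (lexx j) h1.
by rewrite -leNgt; lia.
Qed.

Lemma subst2_sum (V : lmodType K) (I : Type) (r : seq I) (F : I -> int -> int -> V) j k :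
  (forall i, lbounded2 (F i)) ->
  subst2 (fun m n => \sum_(i <- r) F i m n) j k = \sum_(i <- r) subst2 (F i) j k.
Proof.
move=> H; elim: r => [|x r IH].
  by rewrite big_nil; do 2 apply: fsum_eq0 => ?; rewrite big_nil scaler0.
have [M1 H1] := subst2_box j k (H x).
have [M2 H2] := subst2_box j k (lbounded2_sum r H).
by rewrite big_cons -IH /subst2 -(fsum2D H1 H2); do 2 apply: eq_fsum => ?;
  rewrite big_cons scalerDr.
Qed.

End Substitution.

Section SubstitutionMultiplicative.
Variables (K : fieldType) (phi : int -> int -> K).
Hypothesis phi_low : forall j k, j < 0 -> phi j k = 0.
Hypothesis phi_rows : forall j, lbounded (phi j).
Hypothesis phi_at0 : forall k, phi 0 k = (k == 1)%:R.

Notation Phi := (of_coef2 phi).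
Notation P m := (coef2 (Phi ^ m)).

Let P_row := Phi_exp_neq0_row phi_low phi_rows phi_at0.

Variables (V : lmodType K) (f : int -> int -> K) (F : int -> int -> V).
Hypotheses (Lf : lbounded2 f) (LF : lbounded2 F).

(* Multiplicativity of the substitution: both sides are expanded into the same
   six-fold sum, using [Phi^(c + a) = Phi^a * Phi^c]. *)
Lemma subst2_conv12_expand j k : 0 <= j ->
  subst2 phi (conv12 f F) j k = fsum (fun b => fsum (fun a => fsum (fun c => fsum (fun d =>
    fsum (fun i => fsum (fun l =>
      (P a i (l - b) * P c (j - i) (k - l - d)) *: (f a b *: F c d))))))).
Proof.
move=> hj; have [Nf Hf] := Lf; have [NF HF] := LF.
have [C HC] := coef2_Phi_exp_bound phi_low phi_rows phi_at0 (absz j).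
have hP := Phi_exp_neq0_bound phi_low phi_rows phi_at0 HC.
have E1 : subst2 phi (conv12 f F) j k = fsum (fun m => fsum (fun n => fsum (fun b =>
    fsum (fun a => P m j (k - n) *: (f a b *: F (m - a) (n - b)))))).
  apply: eq_fsum => m; apply: eq_fsum => n.
  have HB : box2 (fun b a => f a b *: F (m - a) (n - b))
      (absz Nf + absz (n - NF)%R + absz Nf + absz (m - NF)%R).
    apply: box2_itv => b a /neq0_scaler [h1 h2].
    have [q1 q2] := lbounded2_neq0 Hf h1; have [q3 q4] := lbounded2_neq0 HF h2.
    by apply/andP; split; apply/andP; split; lia.
  by rewrite conv12E (fsum2_morph (h := fun v => P m j (k - n) *: v) _ _ HB) ?scaler0 //
    => x y; rewrite scalerDr.
have E2 : subst2 phi (conv12 f F) j k = fsum (fun b => fsum (fun a => fsum (fun c =>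
    fsum (fun d => P (c + a) j (k - (d + b)) *: (f a b *: F c d))))).
  rewrite E1 (fsum4_exchange (box4_itv (a1 := Nf + NF) (b1 := k + C%:Z - Nf - NF)
    (a2 := Nf + NF) (b2 := k + C%:Z - Nf - NF) (a3 := Nf) (b3 := k + C%:Z - Nf - NF - NF)
    (a4 := Nf) (b4 := k + C%:Z - Nf - NF - NF) _)); last first.
    move=> m n b a /neq0_scaler [h1 /neq0_scaler [h2 h3]].
    have [q1 q2] := lbounded2_neq0 Hf h2; have [q3 q4] := lbounded2_neq0 HF h3.
    by have q5 := hP _ _ _ (lexx j) h1; split; apply/andP; split; lia.
  apply: eq_fsum => b; apply: eq_fsum => a.
  rewrite -(fsum_shift _ a); apply: eq_fsum => c.
  by rewrite -(fsum_shift _ b); apply: eq_fsum => d; rewrite /= !addrK.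
rewrite E2; apply: eq_fsum => b; apply: eq_fsum => a; apply: eq_fsum => c; apply: eq_fsum => d.
have Phi_unit : Phi \is a GRing.unit by rewrite unitfE Phi_neq0.
rewrite addrC exprzDr // coef2M.
have HB : box2 (fun i l => (P a i l * P c (j - i) (k - (d + b) - l) : K^o))
    (absz 0 + absz j + absz (a - C%:Z)%R + absz (k - (d + b) - c + C%:Z)%R).
  apply: box2_itv => i l /neq0_mulf [h1 h2].
  have q1 := P_row h1; have q2 := P_row h2.
  have q3 := hP a i l ltac:(lia) h1; have q4 := hP c (j - i) _ ltac:(lia) h2.
  by apply/andP; split; apply/andP; split; lia.
rewrite (fsum2_morph (h := fun s : K^o => (s : K) *: (f a b *: F c d)) _ _ HB) ?scale0r //;
  last by move=> x y; rewrite scalerDl.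
apply: eq_fsum => i; rewrite -[RHS](fsum_shift _ b); apply: eq_fsum => l.
by rewrite /= addrK; congr ((_ * P c _ _) *: _); lia.
Qed.

Lemma conv2_subst2_expand j k :
  conv2 (@subst2 _ phi K^o f) (subst2 phi F) j k = fsum (fun i => fsum (fun l => fsum (fun a =>
    fsum (fun b => fsum (fun c => fsum (fun d =>
      (P a i (l - b) * f a b) *: (P c (j - i) (k - l - d) *: F c d))))))).
Proof.
apply: eq_fsum => i; apply: eq_fsum => l.
have [M1 H1] := @subst2_box _ _ phi_low phi_rows phi_at0 K^o f i l Lf.
rewrite (fsum2_morph (h := fun s : K^o => (s : K) *: subst2 phi F (j - i) (k - l)) _ _ H1)
  ?scale0r //; last by move=> x y; rewrite scalerDl.
apply: eq_fsum => a; apply: eq_fsum => b.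
have [M2 H2] := subst2_box phi_low phi_rows phi_at0 (j - i) (k - l) LF.
by rewrite -(fsum2_morph (h := fun v => (P a i (l - b) * f a b) *: v) _ _ H2) ?scaler0 //
  => x y; rewrite scalerDr.
Qed.

Lemma subst2_conv12 j k :
  subst2 phi (conv12 f F) j k = conv2 (@subst2 _ phi K^o f) (subst2 phi F) j k.
Proof.
have [Nf Hf] := Lf; have [NF HF] := LF.
case: (ltrP j 0) => hj.
  rewrite subst2_neg //; symmetry; apply: fsum_eq0 => i; apply: fsum_eq0 => l.
  case: (ltrP i 0) => hi; first by rewrite subst2_neg // scale0r.
  by rewrite (@subst2_neg _ _ phi_low phi_rows phi_at0 _ F) ?scaler0 //; lia.
have [C HC] := coef2_Phi_exp_bound phi_low phi_rows phi_at0 (absz j).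
have hP := Phi_exp_neq0_bound phi_low phi_rows phi_at0 HC.
rewrite subst2_conv12_expand // conv2_subst2_expand.
pose U i l a b c d := (P a i (l - b) * P c (j - i) (k - l - d)) *: (f a b *: F c d).
transitivity (fsum (fun i => fsum (fun l => fsum (fun a => fsum (fun b =>
    fsum (fun c => fsum (fun d => U i l a b c d)))))));
  last by do 6 apply: eq_fsum => ?; rewrite /U !scalerA mulrAC.
pose M := (absz k + absz j + 2 * C + 4 * absz Nf + 4 * absz NF)%N.
have U0 i l a b c d : [|| (M < absz i)%N, (M < absz l)%N, (M < absz a)%N, (M < absz b)%N,
    (M < absz c)%N | (M < absz d)%N] -> U i l a b c d = 0.
  apply: contraTeq => /neq0_scaler [/neq0_mulf [h1 h3] /neq0_scaler [h2 h4]].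
  have [q1 q2] := lbounded2_neq0 Hf h2; have [q3 q4] := lbounded2_neq0 HF h4.
  have q5 := P_row h1; have q6 := P_row h3.
  have q7 := hP a i _ ltac:(lia) h1; have q8 := hP c (j - i) _ ltac:(lia) h3.
  by rewrite /M; lia.
rewrite (@eq_fsum _ _ (fun b => fsum (fun a => fsum (fun i => fsum (fun l =>
    fsum (fun c => fsum (fun d => U i l a b c d))))))) => [|b].
  rewrite (@fsum4_exchange _ (fun b a i l => fsum (fun c => fsum (fun d => U i l a b c d))) M).
    apply: eq_fsum => i; apply: eq_fsum => l; apply: (@fsum2_exchange _ _ M) => b a h.
    by do 2 apply: fsum_eq0 => ?; apply: U0; lia.
  by move=> b a i l h; do 2 apply: fsum_eq0 => ?; apply: U0; lia.
apply: eq_fsum => a; apply: (@fsum4_exchange _ (fun c d i l => U i l a b c d) M).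
by move=> c d i l h; apply: U0; lia.
Qed.

End SubstitutionMultiplicative.

Section Laurent2Action.
Variables (K : fieldType) (V : lmodType K).
Notation L2 := (laurent (laurent K)).
Implicit Types (X Y : L2) (F : int -> int -> V).

Lemma conv2_coef2M X Y F : laurent2 F ->
  conv2 (coef2 (X * Y)) F = conv2 (coef2 X) (conv2 (coef2 Y) F).
Proof. by move=> LF; rewrite coef2M conv2A //; apply: laurent2_coef2. Qed.

Lemma conv2_coef2_sum (I : finType) (X : L2) (U : I -> int -> int -> V) :
  (forall i, laurent2 (U i)) ->
  conv2 (coef2 X) (fun j k => \sum_i U i j k) = fun j k => \sum_i conv2 (coef2 X) (U i) j k.
Proof.
by move=> LU; do 2 apply: functional_extensionality => ?; apply: conv2_sum;
  [apply: laurent2_coef2|].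
Qed.

Lemma conv2_prod_sum (I : finType) (P G : I -> L2) (U : I -> int -> int -> V) :
  (forall i, laurent2 (U i)) ->
  conv2 (coef2 (\prod_i P i)) (fun j k => \sum_i conv2 (coef2 (G i)) (U i) j k) =
  fun j k => \sum_i conv2 (coef2 (G i * \prod_(i' | i' != i) P i'))
                          (conv2 (coef2 (P i)) (U i)) j k.
Proof.
move=> LU; rewrite conv2_coef2_sum => [|i]; last exact: laurent2_conv2 (laurent2_coef2 _) _.
do 2 apply: functional_extensionality => ?; apply: eq_bigr => i _.
rewrite -!conv2_coef2M //; congr (conv2 (coef2 _) _ _ _).
by rewrite (bigD1 i) //=; ring.
Qed.

Lemma conv2_sum_div (I : finType) (P G : I -> L2) F (H : I -> int -> int -> V) :
  laurent2 F -> (forall i, laurent2 (H i)) -> (forall i, P i != 0) ->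
  conv2 (coef2 (\prod_i P i)) F =
    (fun j k => \sum_i conv2 (coef2 (G i * \prod_(i' | i' != i) P i')) (H i) j k) ->
  F = fun j k => \sum_i conv2 (coef2 (G i)) (conv2 (coef2 (P i)^-1) (H i)) j k.
Proof.
move=> LF LH nzP E; have nzPA : \prod_i P i != 0 by apply/prodf_neq0.
rewrite -[F]conv2_oneKK -coef2_1 -(mulVf nzPA) conv2_coef2M // E conv2_coef2_sum => [|i];
  last exact: laurent2_conv2 (laurent2_coef2 _) _.
do 2 apply: functional_extensionality => ?; apply: eq_bigr => i _.
rewrite -!conv2_coef2M //; congr (conv2 (coef2 _) _ _ _).
have nzQ : \prod_(i' | i' != i) P i' != 0 by apply/prodf_neq0.
by rewrite (bigD1 i) //= invfM mulrACA mulVf // mulr1 mulrC.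
Qed.

End Laurent2Action.

Lemma lbounded2_coef2M (K : fieldType) (X Y : laurent (laurent K)) :
  lbounded2 (coef2 X) -> lbounded2 (coef2 Y) ->
  lbounded2 (coef2 (X * Y)).
Proof. by move=> LX LY; rewrite coef2M; exact: (@lbounded2_conv2 _ K^o _ _ LX LY). Qed.

Lemma lbounded2_coef2_1 (K : fieldType) : lbounded2 (coef2 (1 : laurent (laurent K))).
Proof.
by rewrite coef2_1; exists 0 => m n h; rewrite /oneKK (_ : _ && _ = false) //; lia.
Qed.

Lemma lbounded2_coef2_prod (K : fieldType) (I : Type) (r : seq I) (Q : pred I)
    (X : I -> laurent (laurent K)) :
  (forall i, lbounded2 (coef2 (X i))) -> lbounded2 (coef2 (\prod_(i <- r | Q i) X i)).
Proof.
by move=> LX; apply: (big_ind (fun Y => lbounded2 (coef2 Y))) => //;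
  [exact: lbounded2_coef2_1|exact: lbounded2_coef2M].
Qed.

Section SubstLaurent.
Variables (K : fieldType) (phi : int -> int -> K).
Hypothesis phi_low : forall j k, j < 0 -> phi j k = 0.
Hypothesis phi_rows : forall j, lbounded (phi j).
Hypothesis phi_at0 : forall k, phi 0 k = (k == 1)%:R.

Notation L2 := (laurent (laurent K)).
Notation substK := (@subst2 _ phi K^o).
Implicit Types X Y : L2.

(* An [X : L2] with [lbounded2 (coef2 X)] is an element of [K((x1, x2))],
   [x2] being the outer variable; [subst_laurent] substitutes
   [x1 = phi(x, z), x2 = x] into it. *)
Definition subst_laurent X : L2 := @of_coef2 K (substK (tr (coef2 X))).

Lemma laurent2_substK (A : int -> int -> K) : lbounded2 A -> laurent2 (substK A).
Proof. exact: (@laurent2_subst2 _ _ phi_low phi_rows phi_at0 K^o). Qed.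

Lemma coef2_subst_laurent X : lbounded2 (coef2 X) ->
  coef2 (subst_laurent X) = substK (tr (coef2 X)).
Proof. by move=> LX; rewrite of_coef2K //; exact/laurent2_substK/lbounded2_tr. Qed.

Lemma subst_laurentM X Y : lbounded2 (coef2 X) -> lbounded2 (coef2 Y) ->
  subst_laurent (X * Y) = subst_laurent X * subst_laurent Y.
Proof.
move=> LX LY; rewrite /subst_laurent -of_coef2M; [|exact/laurent2_substK/lbounded2_tr..].
congr of_coef2; do 2 apply: functional_extensionality => ?; rewrite coef2M.
exact: (@subst2_conv12 _ _ phi_low phi_rows phi_at0 K^o _ _ (lbounded2_tr LX) (lbounded2_tr LY)).
Qed.

Lemma subst_laurent1 : subst_laurent 1 = 1.
Proof.
rewrite /subst_laurent -[RHS]coef2K coef2_1; congr of_coef2.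
apply: functional_extensionality => j; apply: functional_extensionality => k.
rewrite /subst2 (@fsum_delta _ _ 0) => [|m hm]; last first.
  by apply: fsum_eq0 => n; rewrite /tr /oneKK (negbTE hm) andbF /=; exact: mulr0.
rewrite (@fsum_delta _ _ 0) => [|n hn]; last first.
  by rewrite /tr /oneKK (negbTE hn) /=; exact: mulr0.
by rewrite /tr /oneKK /= subr0 expr0z coef2_1 /oneKK; exact: mulr1.
Qed.

Lemma subst_laurent_prod (I : Type) (r : seq I) (Q : pred I) (X : I -> L2) :
  (forall i, lbounded2 (coef2 (X i))) ->
  subst_laurent (\prod_(i <- r | Q i) X i) = \prod_(i <- r | Q i) subst_laurent (X i).
Proof.
move=> LX; elim: r => [|x r IH]; first by rewrite !big_nil subst_laurent1.
rewrite !big_cons; case: (Q x) => //.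
by rewrite subst_laurentM ?IH //; apply: lbounded2_coef2_prod.
Qed.

Lemma subst2_conv2_coef2 (V : lmodType K) X (F : int -> int -> V) :
  lbounded2 (coef2 X) -> lbounded2 F ->
  subst2 phi (tr (conv2 (coef2 X) F)) = conv2 (coef2 (subst_laurent X)) (subst2 phi (tr F)).
Proof.
move=> LX LF; rewrite coef2_subst_laurent //.
do 2 apply: functional_extensionality => ?.
by apply: subst2_conv12 => //; apply: lbounded2_tr.
Qed.

End SubstLaurent.

Section SubstQuotient.
Variables (K : fieldType) (phi : int -> int -> K).
Hypothesis phi_low : forall j k, j < 0 -> phi j k = 0.
Hypothesis phi_rows : forall j, lbounded (phi j).
Hypothesis phi_at0 : forall k, phi 0 k = (k == 1)%:R.

Notation substK := (@subst2 _ phi K^o).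
Notation sigma := (subst_laurent phi).

Variables (V : lmodType K) (I : finType).
Variables (p g : I -> int -> int -> K) (U : I -> int -> int -> V).
Hypothesis p_lb : forall i, lbounded2 (p i).
Hypothesis g_lb : forall i, lbounded2 (g i).
Hypothesis U_laurent : forall i, laurent2 (tr (U i)).
Hypothesis pU_lb : forall i, lbounded2 (conv12 (p i) (U i)).
Hypothesis substp_neq0 : forall i, substK (p i) <> (fun _ _ => 0).
Hypothesis gU_lb : lbounded2 (fun m n => \sum_i conv12 (g i) (U i) m n).

Let P i := of_coef2 (tr (p i)).
Let G i := of_coef2 (tr (g i)).

Let coef2_P i : coef2 (P i) = tr (p i).
Proof. exact/of_coef2K/lbounded2_laurent2/lbounded2_tr. Qed.

Let coef2_G i : coef2 (G i) = tr (g i).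
Proof. exact/of_coef2K/lbounded2_laurent2/lbounded2_tr. Qed.

Let P_lb i : lbounded2 (coef2 (P i)).
Proof. by rewrite coef2_P; apply: lbounded2_tr. Qed.

Let G_lb i : lbounded2 (coef2 (G i)).
Proof. by rewrite coef2_G; apply: lbounded2_tr. Qed.

Let cofactor_lb i : lbounded2 (coef2 (G i * \prod_(i' | i' != i) P i')).
Proof. by apply: lbounded2_coef2M => //; apply: lbounded2_coef2_prod. Qed.

(* Clearing the denominators [p i], the identity lives in [V((x1, x2))],
   where substitution is multiplicative. *)
Lemma subst2_cleared :
  conv2 (coef2 (\prod_i sigma (P i))) (subst2 phi (fun m n => \sum_i conv12 (g i) (U i) m n)) =
  fun j k => \sum_i conv2 (coef2 (sigma (G i) * \prod_(i' | i' != i) sigma (P i')))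
                          (subst2 phi (conv12 (p i) (U i))) j k.
Proof.
rewrite -(subst_laurent_prod phi_low phi_rows phi_at0 _ _ P_lb).
rewrite -subst2_conv2_coef2 //; [|exact: lbounded2_coef2_prod|exact: lbounded2_tr].
have -> : (fun n m => \sum_i conv12 (g i) (U i) m n) =
    fun j k => \sum_i conv2 (coef2 (G i)) (tr (U i)) j k.
  by do 2 apply: functional_extensionality => ?; apply: eq_bigr => i _; rewrite coef2_G.
rewrite conv2_prod_sum //.
apply: functional_extensionality => j; apply: functional_extensionality => k.
rewrite (subst2_sum phi_low phi_rows phi_at0) => [|i]; last first.
  apply: (@lbounded2_tr _ (conv2 _ _)); apply: lbounded2_conv2 => //.
  by rewrite coef2_P; exact: lbounded2_tr (pU_lb i).
apply: eq_bigr => i _.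
rewrite coef2_P -(subst_laurent_prod phi_low phi_rows phi_at0 _ _ P_lb).
rewrite -subst_laurentM //; last exact: lbounded2_coef2_prod.
exact: (congr1 (fun f => f j k) (subst2_conv2_coef2 phi_low phi_rows phi_at0
  (cofactor_lb i) (lbounded2_tr (pU_lb i)))).
Qed.

Lemma subst2_sum_conv12 :
  (fun j k => \sum_i conv2 (substK (g i))
                (conv2 (invKK (substK (p i))) (subst2 phi (conv12 (p i) (U i)))) j k) =
  subst2 phi (fun m n => \sum_i conv12 (g i) (U i) m n).
Proof.
have sigma_P i : sigma (P i) = @of_coef2 K (substK (p i)) by rewrite /subst_laurent coef2_P.
have sigma_P_neq0 i : sigma (P i) != 0.
  have Lp := laurent2_substK phi_low phi_rows phi_at0 (p_lb i).
  by rewrite sigma_P; apply/eqP => E; exact: substp_neq0 (@of_coef2_eq0 K _ Lp E).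
rewrite [RHS](conv2_sum_div _ _ sigma_P_neq0 subst2_cleared); last first.
- by move=> i; apply: (laurent2_subst2 phi_low phi_rows phi_at0).
- exact: (laurent2_subst2 phi_low phi_rows phi_at0).
do 2 apply: functional_extensionality => ?; apply: eq_bigr => i _.
rewrite coef2_subst_laurent // coef2_G.
have [LI EI] := @invKK_inverse K _ (laurent2_substK phi_low phi_rows phi_at0 (p_lb i))
  (@substp_neq0 i).
by rewrite sigma_P -EI of_coef2K.
Qed.

End SubstQuotient.

Lemma in_EW_laurent2 (K : fieldType) (W : lmodType K) (a b : int -> W -> W) (w : W) :
  in_EW a -> in_EW b -> laurent2 (fun n m => a m (b n w)).
Proof.
move=> [a_lin a_lb] [_ b_lb]; split => [|n]; last exact: a_lb.
have a0 m : a m 0 = 0.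
  have := a_lin m 1 0 0; rewrite scaler0 add0r scale1r => /esym/eqP.
  by rewrite -subr_eq0 addrK => /eqP.
by have [N HN] := b_lb w; exists N => n m hn; rewrite HN // a0.
Qed.

Lemma Y_E_witness (K : fieldType) (W : lmodType K) (phi : int -> int -> K)
    (a b : int -> W -> W) : phi_quasi_compatible phi a b ->
  exists p, qc_witness phi a b p /\ Y_E phi a b = Yp phi a b p.
Proof.
rewrite /Y_E => H; case: excluded_middle_informative => // H'.
by case: (constructive_indefinite_description _ H') => p Hp; exists p.
Qed.

Section DefsBridge.
Variables (K : fieldType) (phi : int -> int -> K).
Hypothesis phi_low : forall j k, j < 0 -> phi j k = 0.
Hypothesis phi_rows : forall j, lbounded (phi j).
Hypothesis phi_at0 : forall k, phi 0 k = (k == 1)%:R.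

Lemma subst_s_subst2 (g : int -> int -> K) : subst_s phi g = @subst2 _ phi K^o g.
Proof.
do 2 apply: functional_extensionality => ?; do 2 apply: eq_fsum => ?.
by rewrite powKK_coef2 // mulrC.
Qed.

Variable W : lmodType K.

Lemma subst_W_subst2 (F : int -> int -> W -> W) j k w :
  subst_W phi F j k w = subst2 phi (fun m n => F m n w) j k.
Proof. by do 2 apply: eq_fsum => ?; rewrite powKK_coef2. Qed.

Lemma Yp_subst2 (a b : int -> W -> W) (p : int -> int -> K) w :
  (fun j k => Yp phi a b p j k w) =
  conv2 (invKK (@subst2 _ phi K^o p)) (subst2 phi (conv12 p (fun m n => a m (b n w)))).
Proof.
do 2 apply: functional_extensionality => ?.
rewrite /Yp mulKW_conv2 subst_s_subst2; congr (conv2 _ _ _ _).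
by do 2 apply: functional_extensionality => ?; apply: subst_W_subst2.
Qed.

End DefsBridge.

Theorem lemma4p6 (K : fieldType) (W : lmodType K) (phi : int -> int -> K)
  (n : nat) (a b : 'I_n -> int -> W -> W) (g : 'I_n -> int -> int -> K) :
  associate phi ->
  (forall i, in_EW (a i) /\ in_EW (b i)) ->
  (forall i, phi_quasi_compatible phi (a i) (b i)) ->
  (forall i, lbounded2 (g i)) ->
  inHom2 (fun m l w => \sum_(i < n) mul12 (g i) (prodab (a i) (b i)) m l w) ->
  forall (j k : int) (w : W),
    \sum_(i < n) mulKW (subst_s phi (g i)) (Y_E phi (a i) (b i)) j k w
    = subst_W phi (fun m l w' =>
        \sum_(i < n) mul12 (g i) (prodab (a i) (b i)) m l w') j k w.
Proof.
move=> [phi_low phi_rows phi_at0 _] ab_EW ab_qc g_lb [_ G_lb] j k w.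
have [p p_spec] := fin_all_exists (fun i => Y_E_witness (ab_qc i)).
have p_lb i : lbounded2 (p i) by have [[p_ps _ _] _] := p_spec i; exists 0 => m l /p_ps.
rewrite (subst_W_subst2 phi_low phi_rows phi_at0).
rewrite -(@subst2_sum_conv12 _ _ phi_low phi_rows phi_at0 _ _ p g
  (fun i m l => a i m (b i l w))) //.
- apply: eq_bigr => i _; rewrite mulKW_conv2 (p_spec i).2 Yp_subst2 //.
  by rewrite subst_s_subst2.
- by move=> i; have [] := ab_EW i; exact: in_EW_laurent2.
- by move=> i; have [[_ [_ pU_lb] _] _] := p_spec i; exact: pU_lb.
- move=> i; have [[_ _ nz] _] := p_spec i.
  by rewrite -(subst_s_subst2 phi_low phi_rows phi_at0).
- exact: G_lb w.
Qed.
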